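(* Let $x_0\in\mathbb{R}^2$, $r_0>0$, and let $K$ be a relatively closed subset of $B(x_0,r_0)$ containing $x_0$. If $K$ separates $B(x_0,r_0)$, then $\beta^{\rm bil}_K(x_0,r_0)\le4\beta_K(x_0,r_0)$.
   Context: $B(x,r)$ is the open ball. Flatness: $\beta_K(x_0,r_0)=r_0^{-1}\inf_\ell\sup_{y\in K\cap B(x_0,r_0)}\mathrm{dist}(y,\ell)$, infimum over lines $\ell$ through $x_0$ (attained); $\nu(x_0,r_0)$ is a unit normal of a chosen minimizing line, and $D^\pm_t(x_0,r_0)=\{x\in B(x_0,r_0):\pm(x-x_0)\cdot\nu(x_0,r_0)>t\}$. Bilateral flatness: $\beta^{\rm bil}_K(x_0,r_0)=r_0^{-1}\inf_\ell\max\{\sup_{y\in K\cap B(x_0,r_0)}\mathrm{dist}(y,\ell),\sup_{y\in\ell\cap B(x_0,r_0)}\mathrm{dist}(y,K)\}$, infimum over lines through $x_0$. $K$ separates $B(x_0,r_0)$ if $\beta:=\beta_K(x_0,r_0)\le1/2$ and $D^+_{\beta r_0}(x_0,r_0)$, $D^-_{\beta r_0}(x_0,r_0)$ lie in distinct connected components of $B(x_0,r_0)\setminus K$. *)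

(* R : realType, points of the plane are pairs R * R
   (product topology = Euclidean topology). *)
From mathcomp Require Import all_boot all_order all_algebra.
From mathcomp Require Import all_classical all_reals all_analysis.
Set Implicit Arguments. Unset Strict Implicit. Unset Printing Implicit Defensive.
Import Order.TTheory GRing.Theory Num.Theory.
Import numFieldNormedType.Exports.
Local Open Scope classical_set_scope.
Local Open Scope ring_scope.

Section Flatness.
Variable R : realType.
Implicit Types (x y z u : R * R) (K A : set (R * R)) (t : R).

Definition edist x y : R := Num.sqrt ((x.1 - y.1) ^+ 2 + (x.2 - y.2) ^+ 2).
Definition oball x (r0 : R) : set (R * R) := [set y | edist x y < r0].
Definition setdist y A : R := inf [set edist y z | z in A].
Definition unitv u : Prop := u.1 ^+ 2 + u.2 ^+ 2 = 1.
Definition line (x0 : R * R) u : set (R * R) :=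
  [set (x0.1 + t * u.1, x0.2 + t * u.2) | t in [set: R]].
Definition normalv u : R * R := (- u.2, u.1).
Definition dotp x y : R := x.1 * y.1 + x.2 * y.2.

Definition flat_width K (x0 : R * R) (r0 : R) u : R :=
  sup [set setdist y (line x0 u) | y in K `&` oball x0 r0].
Definition beta K (x0 : R * R) (r0 : R) : R :=
  inf [set flat_width K x0 r0 u / r0 | u in unitv].
Definition bil_width K (x0 : R * R) (r0 : R) u : R :=
  Num.max (flat_width K x0 r0 u)
          (sup [set setdist y K | y in line x0 u `&` oball x0 r0]).
Definition beta_bil K (x0 : R * R) (r0 : R) : R :=
  inf [set bil_width K x0 r0 u / r0 | u in unitv].

Definition Dplus (x0 : R * R) (r0 : R) u t : set (R * R) :=
  [set x | oball x0 r0 x /\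
     dotp (x.1 - x0.1, x.2 - x0.2) (normalv u) > t].
Definition Dminus (x0 : R * R) (r0 : R) u t : set (R * R) :=
  [set x | oball x0 r0 x /\
     - dotp (x.1 - x0.1, x.2 - x0.2) (normalv u) > t].

Definition separates_wrt K (x0 : R * R) (r0 : R) u : Prop :=
  [/\ unitv u,
      flat_width K x0 r0 u / r0 = beta K x0 r0,
      beta K x0 r0 <= 1 / 2 &
      forall x y, Dplus x0 r0 u (beta K x0 r0 * r0) x ->
                  Dminus x0 r0 u (beta K x0 r0 * r0) y ->
        ~ @connected_component (R * R)%type (oball x0 r0 `\` K) x y].

End Flatness.

(* Let h = beta r0 be the width of the strip around the minimizing line
   x0 + R u.  Take y = x0 + s u on the line inside the ball and t in (h, r0/4).
   Moving y along the line by at most 2t gives a point c whose normal segment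
   of half-length t stays in the ball; its ends lie in D^+_h and D^-_h, so by
   separation the segment meets K, within distance sqrt 5 t <= 3t of y.
   Letting t decrease to h gives dist(y, K) <= 3h; if instead r0 <= 4h, then
   x0 in K already gives dist(y, K) < r0. *)

From Pilot Require Import Defs.
From mathcomp Require Import all_boot all_order all_algebra.
From mathcomp Require Import all_classical all_reals all_analysis.
From mathcomp Require Import ring lra.
Import Order.TTheory GRing.Theory Num.Theory.
Import numFieldNormedType.Exports.
Local Open Scope classical_set_scope.
Local Open Scope ring_scope.
Set Implicit Arguments. Unset Strict Implicit. Unset Printing Implicit Defensive.

Section RealFacts.
Variable R : realType.

Lemma sqrtr_ltr (a r : R) : 0 < r -> (Num.sqrt a < r) = (a < r ^+ 2).
Proof. by move=> r_gt0; rewrite -[in RHS]ltr_sqrt ?exprn_gt0 // sqrtr_sqr gtr0_norm. Qed.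

Lemma sqrtr_ler (a r : R) : 0 <= r -> (Num.sqrt a <= r) = (a <= r ^+ 2).
Proof. by move=> r_ge0; rewrite -[in RHS]ler_sqrt ?exprn_ge0 // sqrtr_sqr ger0_norm. Qed.

Lemma sup_ge0 (E : set R) : (forall x, E x -> 0 <= x) -> 0 <= sup E.
Proof.
move=> E_ge0; have [[x Ex]|/nonemptyPn E0] := pselect (E !=set0); last by rewrite E0 sup0.
have [supE|nosupE] := pselect (has_sup E); last by rewrite sup_out.
exact: le_trans (E_ge0 _ Ex) (sup_upper_bound supE Ex).
Qed.

Lemma inf_ge0 (E : set R) : (forall x, E x -> 0 <= x) -> 0 <= inf E.
Proof.
move=> E_ge0; have [E_neq0|/nonemptyPn E0] := pselect (E !=set0); last by rewrite E0 inf0.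
exact: lb_le_inf.
Qed.

Lemma inf_le_ge0 (E : set R) x : (forall y, E y -> 0 <= y) -> E x -> inf E <= x.
Proof. by move=> E_ge0 Ex; apply: ge_inf => //; exists 0. Qed.

Lemma le_mul_of_between (a b c x : R) : a < b -> 0 < c ->
  (forall t, a < t -> t < b -> x <= c * t) -> x <= c * a.
Proof.
move=> ab c_gt0 xle; apply/ler_addgt0Pr => e e_gt0.
pose t := Num.min (a + e / c) ((a + b) / 2).
have a_lt_t : a < t by rewrite lt_min ltrDl divr_gt0 //=; lra.
have t_lt_b : t < b by rewrite gt_min; apply/orP; right; lra.
apply: le_trans (xle t a_lt_t t_lt_b) _.
rewrite -ler_pdivlMl // ge_min; apply/orP; left.
by rewrite ler_pdivlMl // mulrDr mulrCA divff ?mulr1 // gt_eqF.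
Qed.

Lemma shift_inside_disk (s t r : R) : s ^+ 2 < r ^+ 2 -> 0 < t -> 4 * t < r ->
  exists2 c, `|s - c| <= 2 * t & c ^+ 2 + t ^+ 2 < r ^+ 2.
Proof.
move=> s_in t_gt0 t_small.
have [inside|outside] := ltP (s ^+ 2 + t ^+ 2) (r ^+ 2).
  by exists s; rewrite ?subrr ?normr0 //; lra.
have [s_ge0|s_lt0] := leP 0 s.
  exists (s - 2 * t); first by rewrite opprB addrCA subrr addr0 ger0_norm; lra.
  have : 5 * t <= 4 * s by nra.
  nra.
exists (s + 2 * t); first by rewrite opprD addrA subrr add0r normrN ger0_norm; lra.
have : 5 * t <= - 4 * s by nra.
nra.
Qed.

End RealFacts.

Section Frame.
Variables (R : realType) (x0 u : R * R).

Definition frame (s tau : R) : R * R :=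
  (x0.1 + s * u.1 - tau * u.2, x0.2 + s * u.2 + tau * u.1).

Lemma frame00 : frame 0 0 = x0.
Proof. by rewrite /frame !mul0r !subr0 !addr0 -surjective_pairing. Qed.

Lemma lineE : line x0 u = [set frame s 0 | s in [set: R]].
Proof.
by rewrite /line; congr (_ @` _); apply/funext => s; rewrite /frame !mul0r subr0 addr0.
Qed.

Lemma continuous_frame s : continuous (frame s).
Proof.
move=> tau; apply: (@cvg_pair _ _ _ _ (nbhs (_ : R)) (nbhs (_ : R))) => /=.
  by apply: cvgB; [exact: cvg_cst | apply: cvgMl; exact: cvg_id].
by apply: cvgD; [exact: cvg_cst | apply: cvgMl; exact: cvg_id].
Qed.

Hypothesis u_unit : unitv u.

Lemma edist_frame s tau s' tau' :
  Defs.edist (frame s tau) (frame s' tau') = Num.sqrt ((s - s') ^+ 2 + (tau - tau') ^+ 2).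
Proof.
rewrite /Defs.edist /frame /=; congr Num.sqrt; move: u_unit; rewrite /unitv => u1.
rewrite -[RHS]mulr1 -u1; ring.
Qed.

Lemma oball_frame r : 0 < r -> forall s tau,
  oball x0 r (frame s tau) <-> s ^+ 2 + tau ^+ 2 < r ^+ 2.
Proof.
by move=> r_gt0 s tau; rewrite /oball -{1}frame00 /= edist_frame sqrtr_ltr // !sub0r !sqrrN.
Qed.

Lemma dotp_frame_normal s tau :
  dotp ((frame s tau).1 - x0.1, (frame s tau).2 - x0.2) (normalv u) = tau.
Proof.
rewrite /dotp /normalv /frame /=; move: u_unit; rewrite /unitv => u1.
rewrite -[RHS]mulr1 -u1; ring.
Qed.

End Frame.

Section Widths.
Variable R : realType.
Implicit Types (y z v : R * R) (A K : set (R * R)).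

Lemma setdist_ge0 y A : 0 <= setdist y A.
Proof. by apply: inf_ge0 => _ [z _ <-]; exact: sqrtr_ge0. Qed.

Lemma setdist_le y z A : A z -> setdist y A <= Defs.edist y z.
Proof.
move=> Az; rewrite /setdist; apply: inf_le_ge0; last by exists z.
by move=> _ [w _ <-]; exact: sqrtr_ge0.
Qed.

Lemma flat_width_ge0 K (x0 : R * R) (r0 : R) v : 0 <= flat_width K x0 r0 v.
Proof. by apply: sup_ge0 => _ [y _ <-]; exact: setdist_ge0. Qed.

Lemma bil_width_ge0 K (x0 : R * R) (r0 : R) v : 0 <= bil_width K x0 r0 v.
Proof. by rewrite /bil_width le_max flat_width_ge0. Qed.

Lemma beta_bil_le K (x0 : R * R) (r0 : R) v : 0 < r0 -> unitv v ->
  beta_bil K x0 r0 <= bil_width K x0 r0 v / r0.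
Proof.
move=> r0_gt0 v_unit; apply: inf_le_ge0; last by exists v.
by move=> _ [w _ <-]; rewrite divr_ge0 ?bil_width_ge0 ?ltW.
Qed.

End Widths.

Section Separation.
Variables (R : realType) (x0 u : R * R) (r0 : R) (K : set (R * R)).
Hypotheses (r0_gt0 : 0 < r0) (K_sep : separates_wrt K x0 r0 u).

Local Notation h := (beta K x0 r0 * r0).

Let u_unit : unitv u. Proof. by case: K_sep. Qed.

Lemma flat_width_separatesE : flat_width K x0 r0 u = h.
Proof. by case: K_sep => _ <- _ _; rewrite divfK ?gt_eqF. Qed.

Let h_ge0 : 0 <= h.
Proof. by rewrite -flat_width_separatesE flat_width_ge0. Qed.

Lemma normal_segment_meets s t : 0 <= t -> h < t ->
  s ^+ 2 + t ^+ 2 < r0 ^+ 2 -> exists2 tau, `|tau| <= t & K (frame x0 u s tau).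
Proof.
move=> t_ge0 t_gt_width st_in; have [_ _ _ sep] := K_sep.
have segment_ball tau : `|tau| <= t -> oball x0 r0 (frame x0 u s tau).
  rewrite ler_norml => /andP[tau_ge tau_le].
  by apply/oball_frame => //; nra.
apply: contrapT => segment_avoids_K.
pose C := frame x0 u s @` `[- t, t].
have C_sub : C `<=` oball x0 r0 `\` K.
  move=> _ [tau + <-]; rewrite /= in_itv /= -ler_norml => tau_le.
  by split; [exact: segment_ball | move=> Ktau; apply: segment_avoids_K; exists tau].
have C_connected : connected C.
  apply: connected_continuous_connected.
    by apply/connected_intervalP; exact: interval_is_interval.
  exact/continuous_subspaceT/continuous_frame.
apply: (sep (frame x0 u s t) (frame x0 u s (- t))).
- split; first by apply: segment_ball; rewrite ger0_norm.
  by rewrite (dotp_frame_normal _ u_unit).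
- split; first by apply: segment_ball; rewrite normrN ger0_norm.
  by rewrite (dotp_frame_normal _ u_unit) opprK.
exists C; last by exists (- t) => //=; rewrite in_itv /= lexx /=; lra.
split => //; exists t => //=; rewrite in_itv /= lexx andbT; lra.
Qed.

Lemma setdist_frame_le s t : h < t -> 4 * t < r0 ->
  s ^+ 2 < r0 ^+ 2 -> setdist (frame x0 u s 0) K <= 3 * t.
Proof.
move=> t_gt_width t_small s_in.
have t_gt0 : 0 < t := le_lt_trans h_ge0 t_gt_width.
have [c s_near_c ct_in] := shift_inside_disk s_in t_gt0 t_small.
have [tau tau_le Ktau] := normal_segment_meets (ltW t_gt0) t_gt_width ct_in.
apply: le_trans (setdist_le _ Ktau) _.
rewrite edist_frame // sqrtr_ler ?sub0r ?sqrrN; last lra.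
move: s_near_c tau_le; rewrite !ler_norml => /andP[? ?] /andP[? ?]; nra.
Qed.

Lemma setdist_line_le y : K x0 -> (line x0 u `&` oball x0 r0) y ->
  setdist y K <= 4 * h.
Proof.
move=> Kx0 []; rewrite lineE => -[s _ <-] /(oball_frame _ u_unit r0_gt0).
rewrite expr0n addr0 /= => s_in.
have [r0_le|r0_gt] := leP r0 (4 * h).
  apply: le_trans (setdist_le _ Kx0) (le_trans _ r0_le).
  by rewrite -{2}(frame00 x0 u) edist_frame // subr0 subrr expr0n addr0 sqrtr_ler ?ltW.
apply: le_trans (_ : _ <= 3 * h) _; first last.
  by rewrite ler_wpM2r // ler_nat.
apply: (@le_mul_of_between _ _ (r0 / 4)) => //; first lra.
by move=> t t_gt t_lt; apply: setdist_frame_le => //; lra.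
Qed.

Lemma bil_width_le : K x0 -> bil_width K x0 r0 u <= 4 * h.
Proof.
move=> Kx0; rewrite /bil_width ge_max flat_width_separatesE.
apply/andP; split.
  by rewrite ler_peMl ?lerDl.
apply: ge_sup; last by move=> _ [y y_in <-]; exact: setdist_line_le.
exists (setdist x0 K), x0 => //; split.
  by rewrite lineE; exists 0 => //; rewrite frame00.
by rewrite -{2}(frame00 x0 u) (oball_frame _ u_unit r0_gt0) expr0n addr0 exprn_gt0.
Qed.

End Separation.

Theorem lemma4p2 (R : realType) (x0 : R * R) (r0 : R) (K : set (R * R))
  (u : R * R) :
  0 < r0 ->
  K `<=` oball x0 r0 ->
  (exists F : set (R * R), closed F /\ K = F `&` oball x0 r0) ->
  K x0 ->
  separates_wrt K x0 r0 u ->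
  beta_bil K x0 r0 <= 4 * beta K x0 r0.
Proof.
move=> r0_gt0 _ _ Kx0 K_sep; have [u_unit _ _ _] := K_sep.
apply: le_trans (beta_bil_le K x0 r0_gt0 u_unit) _.
by rewrite ler_pdivrMr // -mulrA bil_width_le.
Qed.
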